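(* Let $G$ be a symmetric restaking network and $\alpha_t$ a tight attack in $G$. Then there exists a consolidated attack $\alpha_c$ in $G$ (for a suitable ordering $v_1,\dots,v_m$ of $V$) with $C(\alpha_c)\le C(\alpha_t)$ and $\Pi(\alpha_c)=\Pi(\alpha_t)$.
   Context: A restaking network is a tuple $G=(V,S,\sigma,w,\theta,\pi)$ with finite nonempty validator set $V$, finite service set $S$, stake $\sigma:V\to\mathbb{R}_{>0}$, allocation $w:V\times S\to\mathbb{R}_{\ge0}$ with $w(v,s)\le\sigma(v)$, thresholds $\theta:S\to[0,1]$, prizes $\pi:S\to\mathbb{R}_{>0}$. An attack is $\alpha:V\times S\to\mathbb{R}_{\ge0}$ with $\alpha(v,s)\le w(v,s)$; attacked services $S_\alpha=\{s:\sum_v\alpha(v,s)\ge\theta(s)\sum_v w(v,s)\}$; validator cost $c_v(\alpha)=\min(\sigma(v),\sum_{s\in S_\alpha}\alpha(v,s))$; total cost $C(\alpha)=\sum_vc_v(\alpha)$; prize $\Pi(\alpha)=\sum_{s\in S_\alpha}\pi(s)$. $G$ is symmetric if all validators have the same stake $\sigma$, for each $s$ all validators have the same allocation $w(s)$, and all services have the same threshold $\theta$. Let $m=|V|$. An attack is tight if $\sum_v\alpha(v,s)=\theta m\,w(s)$ for all $s\in S_\alpha$. With $V=\{v_1,\dots,v_m\}$, an attack is consolidated if for every $s\in S_\alpha$ and $i\in\{1,\dots,m\}$: $\alpha(v_i,s)=w(s)$ if $i\le\lfloor\theta m\rfloor$; $\alpha(v_i,s)=(\theta m-\lfloor\theta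 m\rfloor)w(s)$ if $i=\lfloor\theta m\rfloor+1$; $\alpha(v_i,s)=0$ otherwise. *)

From HB Require Import structures.
From mathcomp Require Import all_boot all_order all_algebra.
From mathcomp Require Import reals.
Set Implicit Arguments. Unset Strict Implicit. Unset Printing Implicit Defensive.
Import Order.TTheory GRing.Theory Num.Theory.
Local Open Scope ring_scope.

(* A restaking network G = (V,S,sigma,w,theta,pi); V and S are the finite types. *)
Record network (R : realType) (V S : finType) := Network {
  stake : V -> R;
  alloc : V -> S -> R;
  thr   : S -> R;
  prize : S -> R }.

Definition valid_network (R : realType) (V S : finType) (G : network R V S) : Prop :=
  [/\ (0 < #|V|)%N,
      (forall v, 0 < stake G v),
      (forall v s, 0 <= alloc G v s /\ alloc G v s <= stake G v),
      (forall s, 0 <= thr G s /\ thr G s <= 1)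
    & (forall s, 0 < prize G s)].

Definition is_attack (R : realType) (V S : finType) (G : network R V S)
  (a : V -> S -> R) : Prop :=
  forall v s, 0 <= a v s /\ a v s <= alloc G v s.

Definition attacked (R : realType) (V S : finType) (G : network R V S)
  (a : V -> S -> R) (s : S) : bool :=
  thr G s * (\sum_(v : V) alloc G v s) <= \sum_(v : V) a v s.

Definition vcost (R : realType) (V S : finType) (G : network R V S)
  (a : V -> S -> R) (v : V) : R :=
  Num.min (stake G v) (\sum_(s : S | attacked G a s) a v s).

Definition cost (R : realType) (V S : finType) (G : network R V S)
  (a : V -> S -> R) : R := \sum_(v : V) vcost G a v.

Definition prize_of (R : realType) (V S : finType) (G : network R V S)
  (a : V -> S -> R) : R := \sum_(s : S | attacked G a s) prize G s.

Definition symmetric_with (R : realType) (V S : finType) (G : network R V S)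
  (sg th : R) (ws : S -> R) : Prop :=
  [/\ (forall v, stake G v = sg),
      (forall v s, alloc G v s = ws s)
    & (forall s, thr G s = th)].

Definition symmetric (R : realType) (V S : finType) (G : network R V S) : Prop :=
  exists sg th ws, symmetric_with G sg th ws.

Definition tight (R : realType) (V S : finType) (G : network R V S)
  (th : R) (ws : S -> R) (a : V -> S -> R) : Prop :=
  forall s, attacked G a s -> \sum_(v : V) a v s = th * #|V|%:R * ws s.

(* consolidated w.r.t. the ordering ord : 'I_m -> V (v_{i} = ord (i-1));
   the 0-based index j corresponds to i = j+1. *)
Definition consolidated (R : realType) (V S : finType) (G : network R V S)
  (th : R) (ws : S -> R) (ord : 'I_#|V| -> V) (a : V -> S -> R) : Prop :=
  forall s, attacked G a s -> forall j : 'I_#|V|,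
    let i : int := (j.+1)%:Z in
    let fl : int := Num.floor (th * #|V|%:R) in
    a (ord j) s =
      if i <= fl then ws s
      else if i == fl + 1 then (th * #|V|%:R - fl%:~R) * ws s
      else 0.

From HB Require Import structures.
From mathcomp Require Import all_boot all_order all_algebra.
From mathcomp Require Import reals.
From mathcomp Require Import lra.
Set Implicit Arguments. Unset Strict Implicit. Unset Printing Implicit Defensive.
Import Order.TTheory GRing.Theory Num.Theory.
Local Open Scope ring_scope.

(* In a symmetric network every attacked service receives exactly theta m w(s)
   in a tight attack, and a validator's cost min(sigma, x) is concave in its
   total contribution x.  Among all ways of splitting the total contribution
   (floor(theta m) + f) W, with W the sum of w(s) over attacked services, into
   per-validator amounts in [0, W], the concave cost sum is smallest for the
   extreme split: floor(theta m) validators contributing W, one validator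
   contributing f W, and the others nothing.  That split is the consolidated
   attack, and it attacks the same services, hence earns the same prize. *)

Definition consolidated_weight (R : numDomainType) (k : nat) (f : R) (j : nat)
  : R :=
  if (j < k)%N then 1 else if j == k then f else 0.

Lemma consolidated_weight_itv (R : numDomainType) (k : nat) (f : R) (j : nat) :
  0 <= f <= 1 -> 0 <= consolidated_weight k f j <= 1.
Proof.
move=> f_itv; rewrite /consolidated_weight.
by case: ifP => _; [|case: ifP => _]; rewrite ?lexx ?ler01.
Qed.

Lemma big_ord_consolidated_weight (R : numDomainType) (F : R -> R)
    (m k : nat) (f : R) :
  F 0 = 0 -> (k <= m)%N -> (k = m -> f = 0) ->
  \sum_(j < m) F (consolidated_weight k f j) = k%:R * F 1 + F f.
Proof.
move=> F0 le_km full_f0.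
rewrite -(big_mkord xpredT (F \o consolidated_weight k f)) /=.
rewrite (big_cat_nat (leq0n k) le_km) /=.
have -> : \sum_(0 <= j < k) F (consolidated_weight k f j) = k%:R * F 1.
  rewrite big_nat_cond (eq_bigr (fun _ => F 1)); last first.
    by move=> j /andP[/andP[_ lt_jk] _]; rewrite /consolidated_weight lt_jk.
  by rewrite -big_nat_cond sumr_const_nat subn0 mulr_natl.
congr (_ + _); have [eq_km | ne_km] := eqVneq k m.
  by rewrite -eq_km big_geq // full_f0 // F0.
rewrite big_ltn ?ltn_neqAle ?ne_km // /consolidated_weight ltnn eqxx.
rewrite big_nat_cond big1 ?addr0 // => j /andP[/andP[lt_kj _] _].
by rewrite ltnNge ltnW // gtn_eqF.
Qed.

Lemma sum_consolidated_weight_rank (R : numDomainType) (V : finType)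
    (F : R -> R) (k : nat) (f : R) :
  F 0 = 0 -> (k <= #|V|)%N -> (k = #|V| -> f = 0) ->
  \sum_(v : V) F (consolidated_weight k f (enum_rank v)) = k%:R * F 1 + F f.
Proof.
move=> F0 le_kV full_f0.
rewrite (reindex (@enum_val V V)) /=; last first.
  by exists enum_rank => v _; rewrite ?enum_valK ?enum_rankK.
under eq_bigr => j _ do rewrite enum_valK.
exact: big_ord_consolidated_weight.
Qed.

Lemma sum_min_excess (R : realDomainType) (V : finType) (c : R) (x : V -> R) :
  \sum_v Num.min c (x v) = \sum_v x v - \sum_(v | c < x v) (x v - c).
Proof.
rewrite (bigID (fun v => c < x v)) /= [in RHS](bigID (fun v => c < x v)) /=.
rewrite (eq_bigr (fun => c)) => [|v lt_cx]; last by rewrite min_l ?ltW.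
rewrite [X in _ + X](eq_bigr x) => [|v]; last by rewrite -leNgt => /min_r.
by rewrite sumrB sumr_const; lra.
Qed.

Lemma sum_min_ge_consolidated (R : realDomainType) (V : finType)
    (x : V -> R) (c W f : R) (k : nat) :
  0 < c -> 0 <= W -> 0 <= f -> (forall v, 0 <= x v <= W) ->
  \sum_v x v = (k%:R + f) * W ->
  k%:R * Num.min c W + Num.min c (f * W) <= \sum_v Num.min c (x v).
Proof.
move=> c_gt0 W_ge0 f_ge0 x_itv sum_x.
pose p := #|[pred v | c < x v]|.
have excess_le_W : \sum_(v | c < x v) (x v - c) <= p%:R * (W - c).
  by rewrite mulr_natl -sumr_const; apply: ler_sum => v _; have := x_itv v; lra.
have excess_le_sum : \sum_(v | c < x v) (x v - c) <= \sum_v x v - p%:R * c.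
  rewrite sumrB sumr_const -mulr_natr (bigID (fun v => c < x v) xpredT) /=.
  suff : 0 <= \sum_(v | ~~ (c < x v)) x v by lra.
  by apply: sumr_ge0 => v _; have := x_itv v; lra.
rewrite sum_min_excess.
have minW_le : Num.min c W <= c /\ Num.min c W <= W by rewrite !ge_min !lexx ?orbT.
have minfW_le : Num.min c (f * W) <= c /\ Num.min c (f * W) <= f * W.
  by rewrite !ge_min !lexx ?orbT.
have [le_pk | lt_kp] := leqP p k.
- (* few validators exceed the cap: their excess is at most k (W - min c W) *)
  have : p%:R * (W - c) <= k%:R * (W - Num.min c W).
    apply: (le_trans (y := p%:R * (W - Num.min c W))).
      by apply: ler_wpM2l => //; lra.
    by apply: ler_wpM2r; [lra | rewrite ler_nat].
  rewrite sum_x; nra.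
- (* many validators exceed the cap: each of at least k + 1 of them pays c *)
  have : k%:R + 1 <= p%:R :> R by rewrite natr1 ler_nat.
  have : 0 <= k%:R :> R by [].
  nra.
Qed.

Section Consolidation.
Variables (R : realType) (V S : finType) (G : network R V S).
Variables (sg th : R) (ws : S -> R).
Hypothesis stake_sym : forall v, stake G v = sg.
Hypothesis alloc_sym : forall v s, alloc G v s = ws s.
Hypothesis thr_sym : forall s, thr G s = th.
Hypothesis sg_gt0 : 0 < sg.
Hypothesis ws_ge0 : forall s, 0 <= ws s.

Variable k : nat.
Hypothesis floor_quota : Num.floor (th * #|V|%:R) = k%:Z.
Hypothesis quota_le : th * #|V|%:R <= #|V|%:R.

Let frac := th * #|V|%:R - k%:R.

Let frac_itv : 0 <= frac < 1.
Proof. by have := floor_itv (th * #|V|%:R); rewrite floor_quota intrD /frac; lra. Qed.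

Let k_le_card : (k <= #|V|)%N.
Proof.
by rewrite -(ler_nat R); case/andP: frac_itv; move: quota_le; rewrite /frac; lra.
Qed.

Let frac_full : k = #|V| -> frac = 0.
Proof.
by case/andP: frac_itv; move: quota_le; rewrite /frac => + + _ eq_kV; rewrite eq_kV; lra.
Qed.

Variable at_ : V -> S -> R.
Hypothesis at_attack : is_attack G at_.
Hypothesis at_tight : tight G th ws at_.

Definition consolidate : V -> S -> R := fun v s =>
  if attacked G at_ s then consolidated_weight k frac (enum_rank v) * ws s
  else 0.

Lemma sum_alloc_sym s : \sum_v alloc G v s = #|V|%:R * ws s.
Proof. by under eq_bigr => v _ do rewrite alloc_sym; rewrite sumr_const mulr_natl. Qed.

Lemma sum_consolidate s :
  \sum_v consolidate v s = if attacked G at_ s then th * #|V|%:R * ws s else 0.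
Proof.
rewrite /consolidate; case: (attacked G at_ s); last by rewrite big1.
rewrite -mulr_suml (@sum_consolidated_weight_rank _ _ id) //=.
by rewrite /frac mulr1 addrC subrK.
Qed.

Lemma attacked_consolidate : attacked G consolidate =1 attacked G at_.
Proof.
move=> s; rewrite [LHS]/attacked sum_consolidate sum_alloc_sym thr_sym mulrA.
case at_s: (attacked G at_ s); first by rewrite lexx.
have : 0 <= \sum_v at_ v s by apply: sumr_ge0 => v _; case: (at_attack v s).
move: at_s; rewrite /attacked sum_alloc_sym thr_sym mulrA => /negbT.
by rewrite -!ltNge => ? ?; apply/negbTE; rewrite -ltNge; lra.
Qed.

Lemma consolidate_is_attack : is_attack G consolidate.
Proof.
move=> v s; rewrite /consolidate alloc_sym; case: ifP => _; last by rewrite lexx.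
have := @consolidated_weight_itv _ k frac (enum_rank v); have := ws_ge0 s.
by move: frac_itv; split; nra.
Qed.

Lemma consolidate_consolidated : consolidated G th ws enum_val consolidate.
Proof.
move=> s; rewrite attacked_consolidate => at_s j /=.
rewrite /consolidate at_s enum_valK floor_quota /consolidated_weight.
rewrite -(PoszD k 1) addn1 lez_nat eqz_nat eqSS.
by case: ifP => _; [rewrite mul1r | case: ifP => _; rewrite ?mul0r].
Qed.

Lemma cost_consolidate_le : cost G consolidate <= cost G at_.
Proof.
set W := \sum_(s | attacked G at_ s) ws s.
have W_ge0 : 0 <= W by apply: sumr_ge0.
have -> : cost G consolidate =
    \sum_(v : V) Num.min sg (consolidated_weight k frac (enum_rank v) * W).
  apply: eq_bigr => v _; rewrite /vcost stake_sym (eq_bigl _ _ attacked_consolidate).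
  rewrite mulr_sumr; congr Num.min; apply: eq_bigr => s at_s.
  by rewrite /consolidate at_s mulrC.
rewrite (@sum_consolidated_weight_rank _ _ (fun c => Num.min sg (c * W))) //=;
  last by rewrite mul0r min_r ?ltW.
rewrite mul1r /cost /vcost; under eq_bigr => v _ do rewrite stake_sym.
apply: sum_min_ge_consolidated => // [|v|].
- by case/andP: frac_itv.
- apply/andP; split; first by apply: sumr_ge0 => s _; case: (at_attack v s).
  by apply: ler_sum => s _; rewrite -(alloc_sym v s); case: (at_attack v s).
- rewrite exchange_big /= (eq_bigr (fun s => th * #|V|%:R * ws s)) => [|s /at_tight //].
  by rewrite -mulr_sumr /frac addrC subrK.
Qed.

Lemma prize_consolidate : prize_of G consolidate = prize_of G at_.
Proof. exact: eq_bigl attacked_consolidate. Qed.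

End Consolidation.

Theorem mainTheorem11 (R : realType) (V S : finType) (G : network R V S)
  (sg th : R) (ws : S -> R) (at_ : V -> S -> R) :
  valid_network G ->
  symmetric_with G sg th ws ->
  is_attack G at_ ->
  tight G th ws at_ ->
  exists (ord : 'I_#|V| -> V) (ac : V -> S -> R),
    [/\ bijective ord, is_attack G ac, consolidated G th ws ord ac,
        cost G ac <= cost G at_ & prize_of G ac = prize_of G at_].
Proof.
case=> /card_gt0P[v0 _] stake_gt0 alloc_itv thr_itv _ [stake_sym alloc_sym thr_sym].
move=> at_attack at_tight.
have enum_val_bij : bijective (@enum_val V V).
  by exists enum_rank; [exact: enum_valK | exact: enum_rankK].
have [s0 _ | no_service] := pickP (@predT S); last first.
  by exists enum_val, at_; split => // s; have := no_service s.
have sg_gt0 : 0 < sg by rewrite -(stake_sym v0).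
have ws_ge0 s : 0 <= ws s by rewrite -(alloc_sym v0 s); case: (alloc_itv v0 s).
have [th_ge0 th_le1] : 0 <= th /\ th <= 1 by rewrite -(thr_sym s0).
have quota_le : th * #|V|%:R <= #|V|%:R by rewrite ler_piMl.
have [k floor_quota] : exists k : nat, Num.floor (th * #|V|%:R) = k%:Z.
  have : 0 <= Num.floor (th * #|V|%:R) by rewrite floor_ge0 mulr_ge0.
  by case: (Num.floor _) => // k _; exists k.
exists enum_val, (consolidate G th ws k at_); split.
- exact: enum_val_bij.
- exact: (consolidate_is_attack alloc_sym ws_ge0 floor_quota at_).
- exact: (consolidate_consolidated alloc_sym thr_sym floor_quota quota_le at_attack).
- exact: (cost_consolidate_le stake_sym alloc_sym thr_sym sg_gt0 ws_ge0 floor_quota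
    quota_le at_attack at_tight).
- exact: (prize_consolidate alloc_sym thr_sym floor_quota quota_le at_attack).
Qed.
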